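(* (Operator Hornich-Hlawka inequality.) Let $A,B,C,X$ be $N\times N$ real symmetric positive semidefinite matrices and $p\geq1$ an integer. Then, in the Löwner order on symmetric operators on $(\mathbb{R}^{N})^{\otimes p}$, \[ \otimes^{p}(A+X)+\otimes^{p}(B+X)+\otimes^{p}(C+X)+\otimes^{p}(A+B+C+X)\geq\otimes^{p}(A+B+X)+\otimes^{p}(B+C+X)+\otimes^{p}(C+A+X)+\otimes^{p}X, \] where $\otimes^{p}Y=Y\otimes\cdots\otimes Y$ ($p$ factors, Kronecker/tensor product).
   Context: The Löwner order: $S\leq T$ iff $T-S$ is positive semidefinite. *)

From HB Require Import structures.
From mathcomp Require Import all_boot all_order all_algebra.
From mathcomp Require Import mxtens.
Set Implicit Arguments.
Unset Strict Implicit.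
Unset Printing Implicit Defensive.
Import Order.TTheory GRing.Theory Num.Theory.
Local Open Scope ring_scope.

Definition psdmx (R : realFieldType) (n : nat) (A : 'M[R]_n) : Prop :=
  A^T = A /\ forall v : 'cV[R]_n, 0 <= (v^T *m A *m v) 0 0.

Definition lowner_le (R : realFieldType) (n : nat) (S T : 'M[R]_n) : Prop :=
  psdmx (T - S).

From HB Require Import structures.
From mathcomp Require Import all_boot all_order all_algebra.
From mathcomp Require Import mxtens.
From mathcomp Require Import ring.
Set Implicit Arguments.
Unset Strict Implicit.
Unset Printing Implicit Defensive.
Import Order.TTheory GRing.Theory Num.Theory.
Local Open Scope ring_scope.

(* Over an ordered field the positive semidefinite matrices are exactly the
   nonnegative combinations of outer products u u^T (symmetric Gaussian
   elimination, i.e. an LDL^T decomposition, needs no square roots).  This cone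
   is visibly closed under sums and Kronecker products.  Writing
   Y^(k+1) = Y (x) Y^k and expanding, the first, second and third order
   differences of Y |-> Y^(k+1) at X in the directions A, B, C are sums of
   Kronecker products of A, B, C, X with the differences of order <= 3 at
   level k, all taken at X; hence by induction on k they all lie in the cone.
   The third order difference is the Hornich-Hlawka defect. *)

Section BilinearForm.

Variables (R : realFieldType) (n : nat).
Implicit Types (M N : 'M[R]_n) (x y : 'cV[R]_n).

Definition bform M x y : R := (x^T *m M *m y) 0 0.

Lemma bformDl M x1 x2 y : bform M (x1 + x2) y = bform M x1 y + bform M x2 y.
Proof. by rewrite /bform linearD /= !mulmxDl mxE. Qed.

Lemma bformDr M x y1 y2 : bform M x (y1 + y2) = bform M x y1 + bform M x y2.
Proof. by rewrite /bform mulmxDr mxE. Qed.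

Lemma bformZl M t x y : bform M (t *: x) y = t * bform M x y.
Proof. by rewrite /bform linearZ /= -!scalemxAl mxE. Qed.

Lemma bformZr M t x y : bform M x (t *: y) = t * bform M x y.
Proof. by rewrite /bform -!scalemxAr mxE. Qed.

Lemma bformBm M N x y : bform (M - N) x y = bform M x y - bform N x y.
Proof. by rewrite /bform mulmxBr mulmxBl !mxE. Qed.

Lemma bformDm M N x y : bform (M + N) x y = bform M x y + bform N x y.
Proof. by rewrite /bform mulmxDr mulmxDl mxE. Qed.

Lemma bformZm M t x y : bform (t *: M) x y = t * bform M x y.
Proof. by rewrite /bform -scalemxAr -scalemxAl mxE. Qed.

Lemma bform_delta M i j : bform M (delta_mx i 0) (delta_mx j 0) = M i j.
Proof. by rewrite /bform trmx_delta -rowE -colE !mxE. Qed.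

Lemma bform_sym M x y : M^T = M -> bform M x y = bform M y x.
Proof.
move=> M_sym; rewrite /bform.
have -> : y^T *m M *m x = (x^T *m M *m y)^T.
  by rewrite !trmx_mul trmxK M_sym mulmxA.
by rewrite [in RHS]mxE.
Qed.

Lemma bform_outer r (u : 'M[R]_(n, r)) x y :
  bform (u *m u^T) x y = (x^T *m u *m (y^T *m u)^T) 0 0.
Proof. by rewrite /bform trmx_mul trmxK !mulmxA. Qed.

Lemma bform_outer_ge0 r (u : 'M[R]_(n, r)) x : 0 <= bform (u *m u^T) x x.
Proof.
rewrite bform_outer mxE; apply: sumr_ge0 => k _.
by rewrite [X in _ * X]mxE -expr2 sqr_ge0.
Qed.

End BilinearForm.

Section OuterCone.

Variable R : realFieldType.

Inductive outer_cone (n : nat) : 'M[R]_n -> Prop :=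
| outer_cone0 : outer_cone 0
| outer_coneS (d : R) (r : nat) (u : 'M[R]_(n, r)) (M : 'M[R]_n) :
    0 <= d -> outer_cone M -> outer_cone (d *: (u *m u^T) + M).

Lemma outer_cone_psd n (M : 'M[R]_n) : outer_cone M -> psdmx M.
Proof.
elim=> [|d r u M' d_ge0 _ [M'_sym M'_psd]].
  by split=> [|v]; rewrite ?trmx0 // mulmx0 mul0mx mxE.
split; first by rewrite linearD /= linearZ /= trmx_mul trmxK M'_sym.
move=> v; rewrite -/(bform _ v v) bformDm bformZm.
by rewrite addr_ge0 ?mulr_ge0 ?bform_outer_ge0 //; apply: M'_psd.
Qed.

Lemma outer_coneD n (M N : 'M[R]_n) :
  outer_cone M -> outer_cone N -> outer_cone (M + N).
Proof.
elim=> [|d r u M' d_ge0 _ IH] coneN; first by rewrite add0r.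
by rewrite -addrA; apply: outer_coneS => //; apply: IH.
Qed.

End OuterCone.

Section TensorLinear.

Variable R : pzRingType.

Lemma tensmxDl m n p q (M1 M2 : 'M[R]_(m, n)) (N : 'M[R]_(p, q)) :
  (M1 + M2) *t N = M1 *t N + M2 *t N.
Proof. by apply/matrixP=> i j; rewrite !mxE mulrDl. Qed.

Lemma tensmxDr m n p q (M : 'M[R]_(m, n)) (N1 N2 : 'M[R]_(p, q)) :
  M *t (N1 + N2) = M *t N1 + M *t N2.
Proof. by apply/matrixP=> i j; rewrite !mxE mulrDr. Qed.

Lemma tensmxZl m n p q (d : R) (M : 'M[R]_(m, n)) (N : 'M[R]_(p, q)) :
  (d *: M) *t N = d *: (M *t N).
Proof. by apply/matrixP=> i j; rewrite !mxE mulrA. Qed.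

End TensorLinear.

Lemma tensmxZr (R : comPzRingType) m n p q (d : R)
    (M : 'M[R]_(m, n)) (N : 'M[R]_(p, q)) :
  M *t (d *: N) = d *: (M *t N).
Proof. by apply/matrixP=> i j; rewrite !mxE mulrCA. Qed.

Lemma outer_cone_tens (R : realFieldType) m n (M : 'M[R]_m) (N : 'M[R]_n) :
  outer_cone M -> outer_cone N -> outer_cone (M *t N).
Proof.
elim=> [|d r u M' d_ge0 _ IHM] coneN; first by rewrite tens0mx; exact: outer_cone0.
rewrite tensmxDl tensmxZl; apply: outer_coneD; last exact: IHM.
elim: coneN => [|e s w N' e_ge0 _ IHN]; first by rewrite tensmx0 scaler0; exact: outer_cone0.
rewrite tensmxDr scalerDr; apply: outer_coneD; last exact: IHN.
rewrite tensmxZr scalerA -tensmx_mul -trmx_tens -[_ *: _]addr0.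
by apply: outer_coneS; [rewrite mulr_ge0 | exact: outer_cone0].
Qed.

Section SymmetricElimination.

Variables (R : realFieldType) (n : nat).
Implicit Types (N : 'M[R]_n) (i j : 'I_n).

Lemma psd_diag_ge0 N i : psdmx N -> 0 <= N i i.
Proof. by case=> _ N_psd; rewrite -bform_delta; apply: N_psd. Qed.

Lemma psd_row_eq0 N i j : psdmx N -> N i i = 0 -> N i j = 0.
Proof.
case=> N_sym N_psd Nii0; set b := N i j; set c := N j j.
have [//|b_neq0] := eqVneq b 0; exfalso.
(* the quadratic form at t e_i + e_j is 2 t b + c, negative for a suitable t *)
pose t := - (c + 1) / (2 * b).
have := N_psd (t *: delta_mx i 0 + delta_mx j 0); rewrite -/(bform _ _ _).
rewrite !bformDl !bformDr !bformZl !bformZr !bform_delta Nii0.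
rewrite -[N j i]bform_delta bform_sym // bform_delta -/b -/c.
have -> : t * b = - (c + 1) / 2 by rewrite /t; field.
have -> : t * (t * 0) + - (c + 1) / 2 + (- (c + 1) / 2 + c) = -1 :> R by field.
by rewrite oppr_ge0 ler10.
Qed.

Definition schur_elim N i := N - (N i i)^-1 *: (col i N *m (col i N)^T).

Lemma schur_elimE N i k l :
  schur_elim N i k l = N k l - (N i i)^-1 * (N k i * N l i).
Proof. by rewrite !mxE big_ord1 !mxE. Qed.

Lemma psd_schur_elim N i : psdmx N -> 0 < N i i -> psdmx (schur_elim N i).
Proof.
case=> N_sym N_psd Nii_gt0; split.
  by rewrite linearB /= linearZ /= trmx_mul trmxK N_sym.
move=> v; rewrite -/(bform _ v v).
pose e : 'cV[R]_n := delta_mx i 0; set a := N i i; set s := bform N v e.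
have sq_s : bform (col i N *m (col i N)^T) v v = s * s.
  by rewrite bform_outer colE !mulmxA mxE big_ord1 [X in _ * X]mxE.
have Nev : bform N e v = s by rewrite bform_sym.
(* the form of the Schur complement at v is the form of N at v - (s / a) e_i *)
have := N_psd (v + (- (s / a)) *: e); rewrite -/(bform _ _ _).
rewrite /schur_elim bformBm bformZm sq_s !bformDl !bformDr !bformZl !bformZr.
rewrite Nev -/s /e bform_delta -/a.
have a_neq0 : a != 0 by rewrite gt_eqF.
have -> : - (s / a) * s = - (a^-1 * (s * s)) by field.
have -> : - (s / a) * (- (s / a) * a) = a^-1 * (s * s) by field.
by rewrite addNr addr0.
Qed.

Lemma psd_outer_cone N : psdmx N -> outer_cone N.
Proof.
suff cone_rows : forall k, (k <= n)%N -> forall N, psdmx N ->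
    (forall i j, (k <= i)%N -> N i j = 0) -> outer_cone N.
  by move=> N_psd; apply: (cone_rows n) => // i j; rewrite leqNgt ltn_ord.
elim=> [_ {}N _ N0|k IH k_lt_n {}N N_psd Nk0].
  have -> : N = 0 by apply/matrixP=> i j; rewrite mxE N0.
  exact: outer_cone0.
have k_le_n := ltnW k_lt_n; set i := Ordinal k_lt_n.
have N_symE a b : N a b = N b a by rewrite -[in RHS]N_psd.1 mxE.
have Nk1 (l j : 'I_n) : (k <= l)%N -> l != i -> N l j = 0.
  by move=> kl l_neq_i; apply: Nk0; rewrite ltn_neqAle kl andbT eq_sym.
have [Nii0|Nii_neq0] := eqVneq (N i i) 0.
  apply: IH => // l j kl; have [->|] := eqVneq l i; last exact: Nk1.
  exact: psd_row_eq0.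
have Nii_gt0 : 0 < N i i by rewrite lt_neqAle eq_sym Nii_neq0 psd_diag_ge0.
have -> : N = (N i i)^-1 *: (col i N *m (col i N)^T) + schur_elim N i.
  by rewrite addrC subrK.
apply: outer_coneS; first by rewrite invr_ge0 ltW.
apply: IH => //; first exact: psd_schur_elim.
move=> l j kl; rewrite schur_elimE.
have [->|l_neq_i] := eqVneq l i.
  by rewrite mulrA mulVf ?gt_eqF // mul1r (N_symE j i) subrr.
by rewrite !(Nk1 l) ?mul0r ?mulr0 ?subr0.
Qed.

End SymmetricElimination.

Section TensorPowerDifferences.

Variables (R : comPzRingType) (n : nat).
Implicit Types (A B C X : 'M[R]_n).

Definition ntens_diff1 k A X := (A + X) ^t k - X ^t k.

Definition ntens_diff2 k A B X :=
  (A + B + X) ^t k - (A + X) ^t k - (B + X) ^t k + X ^t k.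

Definition ntens_diff3 k A B C X :=
  ((A + X) ^t k + (B + X) ^t k + (C + X) ^t k + (A + B + C + X) ^t k)
  - ((A + B + X) ^t k + (B + C + X) ^t k + (C + A + X) ^t k + X ^t k).

Lemma ntens_diff1_1 A X : ntens_diff1 1 A X = A.
Proof. by rewrite /ntens_diff1 !ntensmx1 addrK. Qed.

Lemma ntens_diff2_1 A B X : ntens_diff2 1 A B X = 0.
Proof. by apply/matrixP=> i j; rewrite !mxE; ring. Qed.

Lemma ntens_diff3_1 A B C X : ntens_diff3 1 A B C X = 0.
Proof. by apply/matrixP=> i j; rewrite !mxE; ring. Qed.

Lemma ntens_diff1S k A X :
  ntens_diff1 k.+2 A X = X *t ntens_diff1 k.+1 A X + A *t (A + X) ^t k.+1.
Proof. by apply/matrixP=> i j; rewrite /ntens_diff1 !ntensmxSS !mxE; ring. Qed.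

Lemma ntens_diff2S k A B X :
  let D := ntens_diff2 k.+1 A B X in
  ntens_diff2 k.+2 A B X =
    X *t D + A *t (D + ntens_diff1 k.+1 B X) + B *t (D + ntens_diff1 k.+1 A X).
Proof.
by apply/matrixP=> i j; rewrite /ntens_diff2 /ntens_diff1 !ntensmxSS !mxE; ring.
Qed.

Lemma ntens_diff3S k A B C X :
  let D := ntens_diff3 k.+1 A B C X in
  ntens_diff3 k.+2 A B C X =
    X *t D + A *t (D + ntens_diff2 k.+1 B C X)
    + B *t (D + ntens_diff2 k.+1 C A X) + C *t (D + ntens_diff2 k.+1 A B X).
Proof.
by apply/matrixP=> i j; rewrite /ntens_diff3 /ntens_diff2 !ntensmxSS !mxE; ring.
Qed.

End TensorPowerDifferences.

Section TensorPowerDifferencesCone.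

Variables (R : realFieldType) (n : nat).
Implicit Types (A B C X : 'M[R]_n).

Lemma outer_cone_ntens k X : outer_cone X -> outer_cone (X ^t k.+1).
Proof.
move=> coneX; elim: k => [|k IH]; first by rewrite ntensmx1.
by rewrite ntensmxSS; apply: outer_cone_tens.
Qed.

Lemma outer_cone_ntens_diff1 k A X :
  outer_cone A -> outer_cone X -> outer_cone (ntens_diff1 k.+1 A X).
Proof.
move=> coneA coneX; elim: k => [|k IH]; first by rewrite ntens_diff1_1.
rewrite ntens_diff1S; apply: outer_coneD; apply: outer_cone_tens => //.
by apply: outer_cone_ntens; apply: outer_coneD.
Qed.

Lemma outer_cone_ntens_diff2 k A B X :
  outer_cone A -> outer_cone B -> outer_cone X ->
  outer_cone (ntens_diff2 k.+1 A B X).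
Proof.
move=> coneA coneB coneX; elim: k => [|k IH].
  by rewrite ntens_diff2_1; apply: outer_cone0.
rewrite ntens_diff2S; do 2?apply: outer_coneD; apply: outer_cone_tens => //;
  by apply: outer_coneD => //; apply: outer_cone_ntens_diff1.
Qed.

Lemma outer_cone_ntens_diff3 k A B C X :
  outer_cone A -> outer_cone B -> outer_cone C -> outer_cone X ->
  outer_cone (ntens_diff3 k.+1 A B C X).
Proof.
move=> coneA coneB coneC coneX; elim: k => [|k IH].
  by rewrite ntens_diff3_1; apply: outer_cone0.
rewrite ntens_diff3S; do 3?apply: outer_coneD; apply: outer_cone_tens => //;
  by apply: outer_coneD => //; apply: outer_cone_ntens_diff2.
Qed.

End TensorPowerDifferencesCone.

Theorem theorem5p8 (R : realFieldType) (N p : nat) (A B C X : 'M[R]_N) :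
  psdmx A -> psdmx B -> psdmx C -> psdmx X -> (1 <= p)%N ->
  lowner_le
    ((A + B + X) ^t p + (B + C + X) ^t p + (C + A + X) ^t p + X ^t p)
    ((A + X) ^t p + (B + X) ^t p + (C + X) ^t p + (A + B + C + X) ^t p).
Proof.
move=> /psd_outer_cone coneA /psd_outer_cone coneB /psd_outer_cone coneC.
move=> /psd_outer_cone coneX; case: p => [//|k] _.
exact/outer_cone_psd/outer_cone_ntens_diff3.
Qed.
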